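(* Let $G$ be a Garside group with Garside monoid $M$, let $a\in G$, let $u,v\in C^{sum}(a)$ and let $x\in M$ with $x^{-1}ux=v$. Then there exist an integer $k\geq 1$, elements $u=u_1,u_2,\ldots,u_k=v$ of $C^{sum}(a)$, and simple elements $s_1,\ldots,s_{k-1}$ such that $x=s_1s_2\cdots s_{k-1}$ and, for each $i=1,\ldots,k-1$, $s_i\in S^{sum}_{u_i}$ and $s_i^{-1}u_is_i=u_{i+1}$ (i.e. $u_is_i=s_iu_{i+1}$).
   Context: A Garside monoid $M$ is an atomic (generated by atoms, with a bound on the number of atoms in any factorization of each element), left and right cancellative monoid in which every pair of elements has left and right lcm's and gcd's, and which has a Garside element $\Delta$ whose left divisors coincide with its right divisors, form a finite set and generate $M$. $G$ is its group of fractions, which contains $M$. The prefix order on $G$: $a\preceq b$ iff $a^{-1}b\in M$. Simple elements are the divisors of $\Delta$ in $M$; $S$ denotes the (finite) set of simple elements. For $x\in G$, $\inf(x)=\max\{r\in\mathbb Z:\Delta^r\preceq x\}$ and $\sup(x)=\min\{r\in\mathbb Z: x\preceq \Delta^r\}$. The summit class $C^{sum}(a)$ of $a\in G$ is the set of conjugates of $a$ in $G$ whose $\inf$ is maximal and whose $\sup$ is minimal among all conjugates of $a$ (a nonempty finite set). For $v\in C^{sum}(a)$, $S^{sum}_v$ denotes the set of minimal elements, with respect to $\preceq$, of $\{s\in S\setminus\{1\}:\ s^{-1}vs\in C^{sum}(a)\}$ (the minimal simple elements for $v$). *)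

From Stdlib Require Import ZArith List Lia.
Import ListNotations.

Set Implicit Arguments.

Record Group := {
  carrier :> Type;
  gmul : carrier -> carrier -> carrier;
  ginv : carrier -> carrier;
  gone : carrier;
  gmulA : forall a b c, gmul a (gmul b c) = gmul (gmul a b) c;
  gmul1l : forall a, gmul gone a = a;
  gmul1r : forall a, gmul a gone = a;
  gmulVl : forall a, gmul (ginv a) a = gone;
  gmulVr : forall a, gmul a (ginv a) = gone
}.

Section Defs.
Variable G : Group.
Local Notation "a * b" := (gmul G a b).
Local Notation "a ^-1" := (ginv G a) (at level 3, format "a ^-1").
Local Notation "1" := (gone G).

Definition gprod (l : list G) : G := fold_right (gmul G) 1 l.

Fixpoint gpow (x : G) (n : nat) : G :=
  match n with O => 1 | S n => x * gpow x n end.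
Definition gzpow (x : G) (r : Z) : G :=
  match r with
  | Z0 => 1
  | Zpos p => gpow x (Pos.to_nat p)
  | Zneg p => (gpow x (Pos.to_nat p))^-1
  end.

Variable M : G -> Prop.   (* the monoid M, viewed inside G *)

Definition prefix (a b : G) : Prop := M (a^-1 * b).
Definition suffix (a b : G) : Prop := M (b * a^-1).

Definition is_atom (x : G) : Prop :=
  M x /\ x <> 1 /\
  forall b c, M b -> M c -> x = b * c -> b = 1 \/ c = 1.

Definition has_lcms (R : G -> G -> Prop) : Prop :=
  forall a b, M a -> M b ->
    exists c, M c /\ R a c /\ R b c /\
      forall d, M d -> R a d -> R b d -> R c d.
Definition has_gcds (R : G -> G -> Prop) : Prop :=
  forall a b, M a -> M b ->
    exists c, M c /\ R c a /\ R c b /\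
      forall d, M d -> R d a -> R d b -> R d c.

Definition generates_group : Prop :=
  forall P : G -> Prop,
    (forall m, M m -> P m) ->
    (forall x y, P x -> P y -> P (x * y)) ->
    (forall x, P x -> P (x^-1)) ->
    forall g, P g.

(** M is a Garside monoid with Garside element Delta, and G is its group of
    fractions (M is a submonoid of G generating G as a group).  Cancellativity
    of M is automatic since M sits inside a group. *)
Definition is_garside (Delta : G) : Prop :=
  M 1 /\ (forall a b, M a -> M b -> M (a * b)) /\
  generates_group /\
  (forall x, M x -> exists l, Forall is_atom l /\ x = gprod l) /\
  (forall x, M x -> exists N : nat, forall l,
        Forall is_atom l -> x = gprod l -> length l <= N) /\
  has_lcms prefix /\ has_gcds prefix /\ has_lcms suffix /\ has_gcds suffix /\
  M Delta /\
  (forall s, M s -> (prefix s Delta <-> suffix s Delta)) /\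
  (exists l : list G, forall s, (M s /\ prefix s Delta) <-> In s l) /\
  (forall x, M x -> exists l,
        Forall (fun s => M s /\ prefix s Delta) l /\ x = gprod l).

Variable Delta : G.

Definition simple (s : G) : Prop := M s /\ prefix s Delta.

Definition is_inf (x : G) (r : Z) : Prop :=
  prefix (gzpow Delta r) x /\
  forall r', prefix (gzpow Delta r') x -> (r' <= r)%Z.
Definition is_sup (x : G) (r : Z) : Prop :=
  prefix x (gzpow Delta r) /\
  forall r', prefix x (gzpow Delta r') -> (r <= r')%Z.

Definition conjugate (a w : G) : Prop := exists g, w = g^-1 * a * g.

Definition Csum (a v : G) : Prop :=
  conjugate a v /\
  exists i s, is_inf v i /\ is_sup v s /\
    forall w j t, conjugate a w -> is_inf w j -> is_sup w t ->
      (j <= i)%Z /\ (s <= t)%Z.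

Definition Ssum_cand (a v s : G) : Prop :=
  simple s /\ s <> 1 /\ Csum a (s^-1 * v * s).
Definition Ssum (a v s : G) : Prop :=
  Ssum_cand a v s /\ forall t, Ssum_cand a v t -> prefix t s -> t = s.

End Defs.

From Stdlib Require Import ZArith List Lia Classical.
Set Implicit Arguments.

(* If a positive element [x <> 1] conjugates [u] into the summit class, so does
   the simple element [x /\ Delta]: the summit class is stable under
   conjugation by [Delta], and it is closed under gcds of conjugators, because
   [Delta^r <= w^-1 u w] and [w^-1 u w <= Delta^s] are both prefix conditions
   on [w] that pass to gcds (the gcd in [M] is also the gcd in [G], as every
   element becomes positive after multiplication by a power of [Delta]).  A
   prefix-minimal such conjugator below [x /\ Delta] is a minimal simple
   element [t] dividing [x]; conjugating by [t] and recursing on [t^-1 x],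
   which has fewer atoms, produces the chain. *)

Definition summit_chain (G : Group) (M : G -> Prop) (D a u v x : G) : Prop :=
  exists (k : nat) (u_ s_ : nat -> G),
    1 <= k /\ u_ 1 = u /\ u_ k = v /\
    (forall i, 1 <= i <= k -> Csum G M D a (u_ i)) /\
    (forall i, 1 <= i <= k - 1 -> simple G M D (s_ i)) /\
    x = gprod G (map s_ (seq 1 (k - 1))) /\
    (forall i, 1 <= i <= k - 1 ->
       Ssum G M D a (u_ i) (s_ i) /\
       gmul G (gmul G (ginv G (s_ i)) (u_ i)) (s_ i) = u_ (i + 1)).

Section GroupIdentities.
Context {G : Group}.
Local Notation "a * b" := (gmul G a b).
Local Notation "a ^-1" := (ginv G a) (at level 3, format "a ^-1").
Local Notation "1" := (gone G).

Lemma mulKg a b : a^-1 * (a * b) = b.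
Proof. rewrite gmulA, gmulVl, gmul1l; reflexivity. Qed.

Lemma mulKVg a b : a * (a^-1 * b) = b.
Proof. rewrite gmulA, gmulVr, gmul1l; reflexivity. Qed.

Lemma invg_unique a b : a * b = 1 -> b = a^-1.
Proof. intro H. rewrite <- (mulKg a b), H, gmul1r; reflexivity. Qed.

Lemma invMg a b : (a * b)^-1 = b^-1 * a^-1.
Proof.
  symmetry; apply invg_unique.
  rewrite <- gmulA, (gmulA G b), gmulVr, gmul1l, gmulVr; reflexivity.
Qed.

Lemma invgK a : a^-1^-1 = a.
Proof. symmetry; apply invg_unique, gmulVl. Qed.

Lemma invg1 : 1^-1 = 1.
Proof. symmetry; apply invg_unique, gmul1l. Qed.

End GroupIdentities.

#[local] Hint Rewrite <- gmulA : group_simpl.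
#[local] Hint Rewrite gmul1l gmul1r gmulVl gmulVr @mulKg @mulKVg @invMg @invgK @invg1
  : group_simpl.

Ltac group := autorewrite with group_simpl; reflexivity.

Section Products.
Context {G : Group}.
Local Notation "a * b" := (gmul G a b).

Lemma gprod_cons c l : gprod G (c :: l) = c * gprod G l.
Proof. reflexivity. Qed.

Lemma gprod_app l1 l2 : gprod G (l1 ++ l2) = gprod G l1 * gprod G l2.
Proof.
  induction l1 as [|c l1 IH]; simpl app; [simpl; group|].
  rewrite !gprod_cons, IH; group.
Qed.

End Products.

Section Powers.
Context {G : Group} (g : G).
Local Notation "a * b" := (gmul G a b).
Local Notation "a ^-1" := (ginv G a) (at level 3, format "a ^-1").
Local Notation "1" := (gone G).
Local Notation "g ^^ r" := (gzpow G g r) (at level 30).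

Lemma gpow_succ_r n : gpow G g (S n) = gpow G g n * g.
Proof.
  induction n as [|n IH]; [simpl; group|].
  change (gpow G g (S (S n))) with (g * gpow G g (S n)).
  rewrite IH at 1; simpl; group.
Qed.

Lemma gzpow_of_nat n : g ^^ Z.of_nat n = gpow G g n.
Proof. destruct n; [reflexivity|]. simpl. rewrite SuccNat2Pos.id_succ; reflexivity. Qed.

Lemma gzpow_opp_of_nat n : g ^^ (- Z.of_nat n) = (gpow G g n)^-1.
Proof.
  destruct n; simpl; [group|]. rewrite SuccNat2Pos.id_succ; reflexivity.
Qed.

Lemma gzpow_succ r : g ^^ Z.succ r = g ^^ r * g.
Proof.
  destruct (Z.le_gt_cases 0 r) as [Hr | Hr].
  - rewrite <- (Z2Nat.id r Hr), <- Nat2Z.inj_succ, !gzpow_of_nat.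
    apply gpow_succ_r.
  - set (n := Z.to_nat (- r - 1)).
    replace r with (- Z.of_nat (S n))%Z by lia.
    replace (Z.succ (- Z.of_nat (S n))) with (- Z.of_nat n)%Z by lia.
    rewrite !gzpow_opp_of_nat; simpl gpow; group.
Qed.

Lemma gzpow_pred r : g ^^ Z.pred r = g ^^ r * g^-1.
Proof. rewrite <- (Z.succ_pred r) at 2. rewrite gzpow_succ; group. Qed.

Lemma gzpow_add r s : g ^^ (r + s) = g ^^ r * g ^^ s.
Proof.
  induction s as [|s IH|s IH] using Z.peano_ind.
  - rewrite Z.add_0_r; simpl; group.
  - rewrite Z.add_succ_r, !gzpow_succ, IH; group.
  - rewrite Z.add_pred_r, !gzpow_pred, IH; group.
Qed.

Lemma gzpow_opp r : g ^^ (- r) = (g ^^ r)^-1.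
Proof.
  apply invg_unique. rewrite <- gzpow_add, Z.add_opp_diag_r; reflexivity.
Qed.

Lemma gzpow_commute r : g * g ^^ r = g ^^ r * g.
Proof. rewrite <- gzpow_succ, <- Z.add_1_l, gzpow_add; simpl; group. Qed.

Lemma gzpow_conj r : g^-1 * g ^^ r * g = g ^^ r.
Proof. rewrite <- gmulA, <- gzpow_commute; group. Qed.

Definition conj_stable (P : G -> Prop) (h : G) : Prop :=
  forall m, P m <-> P (h^-1 * m * h).

Lemma conj_stable_inv P h m : conj_stable P h -> P m -> P (h * m * h^-1).
Proof.
  intros Hh Hm. apply Hh. replace (h^-1 * (h * m * h^-1) * h) with m by group.
  exact Hm.
Qed.

Lemma conj_stable_gzpow P : conj_stable P g -> forall r, conj_stable P (g ^^ r).
Proof.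
  intros Hg r. induction r as [|r IH|r IH] using Z.peano_ind; intro m.
  - simpl. replace (1^-1 * m * 1) with m by group. reflexivity.
  - rewrite gzpow_succ, (IH m), (Hg ((g ^^ r)^-1 * m * g ^^ r)).
    replace ((g ^^ r * g)^-1 * m * (g ^^ r * g))
      with (g^-1 * ((g ^^ r)^-1 * m * g ^^ r) * g) by group.
    reflexivity.
  - rewrite gzpow_pred, (IH m).
    set (w := (g ^^ r)^-1 * m * g ^^ r).
    replace ((g ^^ r * g^-1)^-1 * m * (g ^^ r * g^-1)) with (g * w * g^-1)
      by (unfold w; group).
    rewrite (Hg (g * w * g^-1)).
    replace (g^-1 * (g * w * g^-1) * g) with w by group.
    reflexivity.
Qed.

End Powers.

Lemma Z_bounded_max (Q : Z -> Prop) {lo hi} :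
  Q lo -> (forall r, Q r -> (r <= hi)%Z) ->
  exists m, Q m /\ forall r, Q r -> (r <= m)%Z.
Proof.
  intros Qlo Hhi.
  assert (Hn : forall n, (forall r, Q r -> (r <= lo + Z.of_nat n)%Z) ->
                exists m, Q m /\ forall r, Q r -> (r <= m)%Z).
  { induction n as [|n IH]; intro Hb.
    - exists lo. split; [exact Qlo|]. intros r Qr. specialize (Hb r Qr). lia.
    - destruct (classic (Q (lo + Z.of_nat (S n))%Z)) as [Qn | Nn]; [eauto|].
      apply IH. intros r Qr. specialize (Hb r Qr).
      assert (r <> lo + Z.of_nat (S n))%Z by (intros ->; contradiction). lia. }
  pose proof (Hhi lo Qlo).
  apply (Hn (Z.to_nat (hi - lo))). intros r Qr. specialize (Hhi r Qr). lia.
Qed.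

Lemma Z_bounded_min (Q : Z -> Prop) {lo hi} :
  Q hi -> (forall r, Q r -> (lo <= r)%Z) ->
  exists m, Q m /\ forall r, Q r -> (m <= r)%Z.
Proof.
  intros Qhi Hlo.
  destruct (@Z_bounded_max (fun r => Q (- r)%Z) (- hi) (- lo)) as [m [Qm Hm]].
  - rewrite Z.opp_involutive; exact Qhi.
  - intros r Qr. specialize (Hlo _ Qr). lia.
  - exists (- m)%Z. split; [exact Qm|]. intros r Qr.
    specialize (Hm (- r)%Z). rewrite Z.opp_involutive in Hm. specialize (Hm Qr). lia.
Qed.

(** * Atomic monoids *)

Section Garside.
Variables (G : Group) (M : G -> Prop).
Local Notation "a * b" := (gmul G a b).
Local Notation "a ^-1" := (ginv G a) (at level 3, format "a ^-1").
Local Notation "1" := (gone G).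
Local Notation pre := (prefix G M).

Hypothesis M_one : M 1.
Hypothesis M_mul : forall a b, M a -> M b -> M (a * b).
Hypothesis M_atomic : forall x, M x -> exists l, Forall (is_atom G M) l /\ x = gprod G l.
Hypothesis M_atom_bounded : forall x, M x -> exists N, forall l,
  Forall (is_atom G M) l -> x = gprod G l -> length l <= N.

Lemma prefix_refl a : pre a a.
Proof. unfold prefix. rewrite gmulVl. exact M_one. Qed.

Lemma prefix_trans a b c : pre a b -> pre b c -> pre a c.
Proof.
  unfold prefix. intros Hab Hbc.
  replace (a^-1 * c) with ((a^-1 * b) * (b^-1 * c)) by group. auto.
Qed.

Lemma prefix_mul_l c a b : pre a b -> pre (c * a) (c * b).
Proof. unfold prefix. replace ((c * a)^-1 * (c * b)) with (a^-1 * b) by group. auto. Qed.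

Lemma gprod_M l : Forall M l -> M (gprod G l).
Proof. induction 1; [exact M_one|]. rewrite gprod_cons. auto. Qed.

Definition atom_length_le (x : G) (n : nat) : Prop :=
  forall l, Forall (is_atom G M) l -> x = gprod G l -> length l <= n.

Definition proper_factor (p q : G) : Prop :=
  M p /\ exists b c, M b /\ M c /\ q = b * p * c /\ (b <> 1 \/ c <> 1).

Lemma atom_length_le_factor b p c n :
  M b -> M p -> M c -> b <> 1 \/ c <> 1 -> atom_length_le (b * p * c) n ->
  exists n', n = S n' /\ atom_length_le p n'.
Proof.
  intros Mb Mp Mc Hbc Hn.
  destruct (M_atomic Mb) as [lb [Ab Eb]], (M_atomic Mc) as [lc [Ac Ec]].
  assert (Hlen : forall l, Forall (is_atom G M) l -> p = gprod G l ->
                   length lb + length l + length lc <= n).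
  { intros l Al El. rewrite <- Nat.add_assoc, <- !length_app.
    apply Hn; [rewrite !Forall_app; auto|].
    rewrite !gprod_app, <- Eb, <- El, <- Ec; group. }
  assert (Hbc_len : 1 <= length lb + length lc).
  { destruct Hbc as [Hb | Hc]; [destruct lb | destruct lc]; cbn [length];
      try lia; exfalso; [apply Hb, Eb | apply Hc, Ec]. }
  destruct (M_atomic Mp) as [lp [Ap Ep]]. pose proof (Hlen lp Ap Ep).
  exists (pred n). split; [lia|]. intros l Al El. specialize (Hlen l Al El). lia.
Qed.

Lemma proper_factor_wf : well_founded proper_factor.
Proof.
  assert (Hacc : forall n q, M q -> atom_length_le q n -> Acc proper_factor q).
  { induction n as [|n IH]; intros q Mq Hq; constructor;
      intros p [Mp [b [c [Mb [Mc [-> Hbc]]]]]];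
      destruct (atom_length_le_factor Mb Mp Mc Hbc Hq) as [n' [En Hp]];
      [discriminate|].
    injection En as <-. exact (IH p Mp Hp). }
  intro q. destruct (classic (M q)) as [Mq | Nq].
  - destruct (M_atom_bounded Mq) as [N HN]. exact (Hacc N q Mq HN).
  - constructor. intros p [Mp [b [c [Mb [Mc [-> _]]]]]]. exfalso. auto.
Qed.

(* Otherwise [1 = e * 1 * e^-1] would make [1] a proper factor of itself. *)
Lemma no_units e : M e -> M e^-1 -> e = 1.
Proof.
  intros Me Mie. apply NNPP. intro He.
  assert (H11 : proper_factor 1 1).
  { split; [exact M_one|]. exists e, e^-1. repeat split; auto. group. }
  assert (Hirr : forall q, Acc proper_factor q -> ~ proper_factor q q).
  { induction 1 as [q _ IH]. intro Hqq. exact (IH q Hqq Hqq). }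
  exact (Hirr 1 (proper_factor_wf 1) H11).
Qed.

Lemma exists_prefix_minimal (Q : G -> Prop) t0 : M t0 -> Q t0 ->
  exists t, Q t /\ pre t t0 /\ forall t', M t' -> Q t' -> pre t' t -> t' = t.
Proof.
  induction t0 as [t0 IH] using (well_founded_ind proper_factor_wf).
  intros Mt0 Qt0.
  destruct (classic (exists t', M t' /\ Q t' /\ pre t' t0 /\ t' <> t0))
    as [[t' [Mt' [Qt' [Pt' Ht']]]] | Hmin].
  - assert (Hf : proper_factor t' t0).
    { split; [exact Mt'|]. exists 1, (t'^-1 * t0).
      split; [exact M_one|]. split; [exact Pt'|]. split; [group|].
      right. intro E. apply Ht'.
      apply (f_equal (gmul G t')) in E. rewrite mulKVg, gmul1r in E. auto. }
    destruct (IH t' Hf Mt' Qt') as [t [Qt [Ptt' Htmin]]].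
    exists t. split; [exact Qt|]. split; [exact (prefix_trans Ptt' Pt')|exact Htmin].
  - exists t0. split; [exact Qt0|]. split; [apply prefix_refl|].
    intros t' Mt' Qt' Pt'. apply NNPP. intro Hne. eauto 6.
Qed.

(** * Conjugation by Delta *)

Variable D : G.
Local Notation "g ^^ r" := (gzpow G g r) (at level 30).
Local Notation simple := (simple G M D).

Hypothesis M_generates : generates_group G M.
Hypothesis M_prefix_gcds : has_gcds G M pre.
Hypothesis M_Delta : M D.
Hypothesis simple_prefix_suffix : forall s, M s -> (pre s D <-> suffix G M s D).
Hypothesis M_simple_factor : forall x, M x -> exists l, Forall simple l /\ x = gprod G l.

Lemma simple_conj_Delta s : simple s -> M (D^-1 * s * D) /\ M (D * s * D^-1).
Proof.
  intros [Ms Psd]. pose proof (proj1 (simple_prefix_suffix Ms) Psd) as Ssd.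
  split.
  - assert (H : suffix G M (s^-1 * D) D).
    { unfold suffix. replace (D * (s^-1 * D)^-1) with s by group. exact Ms. }
    apply (proj2 (simple_prefix_suffix Psd)) in H. unfold prefix in H.
    replace (D^-1 * s * D) with ((s^-1 * D)^-1 * D) by group. exact H.
  - assert (H : pre (D * s^-1) D).
    { unfold prefix. replace ((D * s^-1)^-1 * D) with s by group. exact Ms. }
    apply (proj1 (simple_prefix_suffix Ssd)) in H. unfold suffix in H.
    replace (D * s * D^-1) with (D * (D * s^-1)^-1) by group. exact H.
Qed.

Lemma M_conj_Delta : conj_stable M D.
Proof.
  assert (H : forall m, M m -> M (D^-1 * m * D) /\ M (D * m * D^-1)).
  { intros m Mm. destruct (M_simple_factor Mm) as [l [Hl ->]]. clear Mm.
    induction Hl as [|s l Hs _ [IH1 IH2]].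
    - simpl. split; replace (_ * _ * _) with 1 by group; exact M_one.
    - rewrite gprod_cons. destruct (simple_conj_Delta Hs) as [S1 S2]. split.
      + replace (D^-1 * (s * gprod G l) * D)
          with ((D^-1 * s * D) * (D^-1 * gprod G l * D)) by group. auto.
      + replace (D * (s * gprod G l) * D^-1)
          with ((D * s * D^-1) * (D * gprod G l * D^-1)) by group. auto. }
  intro m. split; intro Hm; [apply H, Hm|].
  replace m with (D * (D^-1 * m * D) * D^-1) by group. apply H, Hm.
Qed.

Lemma M_conj_Delta_pow r m : M m <-> M ((D ^^ r)^-1 * m * D ^^ r).
Proof. exact (conj_stable_gzpow M_conj_Delta r m). Qed.

Lemma M_Delta_pow r : (0 <= r)%Z -> M (D ^^ r).
Proof.
  revert r. apply natlike_ind; [exact M_one|].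
  intros r _ IH. rewrite gzpow_succ. auto.
Qed.

Lemma prefix_mul_Delta_pow r a b : pre a b -> pre (a * D ^^ r) (b * D ^^ r).
Proof.
  unfold prefix. rewrite (M_conj_Delta_pow r).
  replace ((a * D ^^ r)^-1 * (b * D ^^ r)) with ((D ^^ r)^-1 * (a^-1 * b) * D ^^ r) by group.
  auto.
Qed.

Lemma prefix_conj_Delta a b : pre a b -> pre (D^-1 * a * D) (D^-1 * b * D).
Proof.
  unfold prefix. rewrite (M_conj_Delta (a^-1 * b)).
  replace ((D^-1 * a * D)^-1 * (D^-1 * b * D)) with (D^-1 * (a^-1 * b) * D) by group.
  auto.
Qed.

Lemma prefix_Delta_pow_inv w s : pre w (D ^^ s) <-> pre (D ^^ (- s)) w^-1.
Proof.
  unfold prefix. rewrite gzpow_opp, invgK, (M_conj_Delta_pow s (D ^^ s * w^-1)).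
  replace ((D ^^ s)^-1 * (D ^^ s * w^-1) * D ^^ s) with (w^-1 * D ^^ s) by group.
  reflexivity.
Qed.

Lemma Delta_pow_prefix_le {r s} : D <> 1 -> pre (D ^^ r) (D ^^ s) -> (r <= s)%Z.
Proof.
  intros HD H. apply Z.nlt_ge. intro Hsr. apply HD.
  unfold prefix in H. rewrite <- gzpow_opp, <- gzpow_add in H.
  assert (Hunit : D ^^ (r - s) = 1).
  { apply no_units; [apply M_Delta_pow; lia|].
    rewrite <- gzpow_opp. replace (- (r - s))%Z with (- r + s)%Z by lia. exact H. }
  apply no_units; [exact M_Delta|].
  replace (D^-1) with (D ^^ (r - s - 1)); [apply M_Delta_pow; lia|].
  apply invg_unique. rewrite gzpow_commute, <- gzpow_succ, <- Hunit. f_equal. lia.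
Qed.

Lemma inverse_multiplier m : M m -> exists r, (0 <= r)%Z /\ M (D ^^ r * m^-1).
Proof.
  intro Mm. destruct (M_simple_factor Mm) as [l [Hl ->]]. clear Mm.
  induction Hl as [|s l [Ms Psd] _ [r [Hr IH]]].
  - exists 0%Z. split; [lia|]. simpl. rewrite invg1, gmul1l. exact M_one.
  - exists (Z.succ r). split; [lia|].
    rewrite gprod_cons, gzpow_succ, <- gzpow_commute.
    replace (D * D ^^ r * (s * gprod G l)^-1)
      with ((D * (D ^^ r * (gprod G l)^-1) * D^-1) * (D * s^-1)) by group.
    apply M_mul; [exact (conj_stable_inv _ M_conj_Delta IH)|].
    exact (proj1 (simple_prefix_suffix Ms) Psd).
Qed.

(* Every element of the group of fractions becomes positive after left
   multiplication by a large enough power of Delta. *)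
Lemma multiplier_exists g : exists c, M c /\ M (c * g).
Proof.
  assert (H : exists r, (0 <= r)%Z /\ M (D ^^ r * g)).
  { apply (M_generates (fun g => exists r, (0 <= r)%Z /\ M (D ^^ r * g))).
    - intros m Mm. exists 0%Z. split; [lia|]. simpl. rewrite gmul1l. exact Mm.
    - intros x y [r1 [Hr1 Hx]] [r2 [Hr2 Hy]]. exists (r2 + r1)%Z. split; [lia|].
      replace (D ^^ (r2 + r1) * (x * y))
        with ((D ^^ r2 * (D ^^ r1 * x) * (D ^^ r2)^-1) * (D ^^ r2 * y))
        by (rewrite gzpow_add; group).
      apply M_mul; [|exact Hy].
      apply conj_stable_inv; [exact (conj_stable_gzpow M_conj_Delta r2)|exact Hx].
    - intros x [r [Hr Hx]]. destruct (inverse_multiplier Hx) as [r' [Hr' Hx']].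
      exists r'. split; [exact Hr'|].
      replace (D ^^ r' * x^-1) with ((D ^^ r' * (D ^^ r * x)^-1) * D ^^ r) by group.
      apply M_mul; [exact Hx'|apply M_Delta_pow, Hr]. }
  destruct H as [r [Hr H]]. exists (D ^^ r). split; [apply M_Delta_pow, Hr|exact H].
Qed.

Definition is_prefix_gcd (z x y : G) : Prop :=
  M z /\ pre z x /\ pre z y /\ forall d, M d -> pre d x -> pre d y -> pre d z.

Lemma prefix_gcd_greatest x y z g :
  is_prefix_gcd z x y -> M x -> M y -> pre g x -> pre g y -> pre g z.
Proof.
  intros [Mz [Zx [Zy Zmax]]] Mx My Gx Gy.
  destruct (multiplier_exists g) as [c [Mc Mcg]].
  destruct (M_prefix_gcds (M_mul Mc Mx) (M_mul Mc My)) as [d [Md [Dx [Dy Dmax]]]].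
  assert (Hcg : pre (c * g) d) by (apply Dmax; auto using prefix_mul_l).
  assert (Hc : pre c d).
  { apply Dmax; unfold prefix; [exact Mc|..]; rewrite mulKg; assumption. }
  assert (Hz : pre (c^-1 * d) z).
  { apply Zmax; [exact Hc|..]; unfold prefix in *;
      rewrite invMg, invgK, <- gmulA; assumption. }
  unfold prefix in *.
  replace (g^-1 * z) with (((c * g)^-1 * d) * ((c^-1 * d)^-1 * z)) by group. auto.
Qed.

(* [Delta^r <= w^-1 u w] says exactly that [u^-1 w Delta^r <= w]. *)
Lemma inf_bound_conj_gcd {r u} x y z : is_prefix_gcd z x y -> M x -> M y ->
  pre (D ^^ r) (x^-1 * u * x) -> pre (D ^^ r) (y^-1 * u * y) ->
  pre (D ^^ r) (z^-1 * u * z).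
Proof.
  intros Hz Mx My Hx Hy. pose proof Hz as [_ [Zx [Zy _]]].
  assert (Hequiv : forall w, pre (D ^^ r) (w^-1 * u * w) <-> pre (u^-1 * (w * D ^^ r)) w).
  { intro w. unfold prefix.
    replace ((u^-1 * (w * D ^^ r))^-1 * w) with ((D ^^ r)^-1 * (w^-1 * u * w)) by group.
    reflexivity. }
  apply Hequiv. apply (prefix_gcd_greatest Hz Mx My).
  - apply prefix_trans with (u^-1 * (x * D ^^ r)); [|apply Hequiv, Hx].
    apply prefix_mul_l, prefix_mul_Delta_pow, Zx.
  - apply prefix_trans with (u^-1 * (y * D ^^ r)); [|apply Hequiv, Hy].
    apply prefix_mul_l, prefix_mul_Delta_pow, Zy.
Qed.

Lemma sup_bound_conj_gcd {s u} x y z : is_prefix_gcd z x y -> M x -> M y ->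
  pre (x^-1 * u * x) (D ^^ s) -> pre (y^-1 * u * y) (D ^^ s) ->
  pre (z^-1 * u * z) (D ^^ s).
Proof.
  intros Hz Mx My.
  assert (Hinv : forall w, (w^-1 * u * w)^-1 = w^-1 * u^-1 * w) by (intro; group).
  rewrite !prefix_Delta_pow_inv, !Hinv.
  exact (inf_bound_conj_gcd Hz Mx My).
Qed.

(** * The summit class *)

Lemma is_inf_unique w i j : is_inf G M D w i -> is_inf G M D w j -> i = j.
Proof. intros [Hi Hmi] [Hj Hmj]. apply Z.le_antisymm; auto. Qed.

Lemma is_sup_unique w s t : is_sup G M D w s -> is_sup G M D w t -> s = t.
Proof. intros [Hs Hms] [Ht Hmt]. apply Z.le_antisymm; auto. Qed.

(* If [Delta = 1], every power of [Delta] divides [w], so [inf w] cannot exist. *)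
Lemma Delta_neq1_of_inf w i : is_inf G M D w i -> D <> 1.
Proof.
  intros [Hi Hmax] HD. assert (H : (Z.succ i <= i)%Z); [|lia].
  apply Hmax. rewrite gzpow_succ, HD, gmul1r. rewrite HD in Hi. exact Hi.
Qed.

Lemma is_inf_exists w {i s} : D <> 1 -> pre (D ^^ i) w -> pre w (D ^^ s) ->
  exists j, is_inf G M D w j.
Proof.
  intros HD Hi Hs. apply (Z_bounded_max (fun r => pre (D ^^ r) w) (hi := s) Hi).
  intros r Hr. apply (Delta_pow_prefix_le HD), (prefix_trans Hr Hs).
Qed.

Lemma is_sup_exists w {i s} : D <> 1 -> pre (D ^^ i) w -> pre w (D ^^ s) ->
  exists t, is_sup G M D w t.
Proof.
  intros HD Hi Hs. apply (Z_bounded_min (fun r => pre w (D ^^ r)) (lo := i) Hs).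
  intros r Hr. apply (Delta_pow_prefix_le HD), (prefix_trans Hi Hr).
Qed.

Lemma conjugate_conj a w g : conjugate G a w -> conjugate G a (g^-1 * w * g).
Proof. intros [h ->]. exists (h * g). group. Qed.

Lemma Csum_inf_sup a u v i s : Csum G M D a u -> Csum G M D a v ->
  is_inf G M D u i -> is_sup G M D u s -> is_inf G M D v i /\ is_sup G M D v s.
Proof.
  intros [Cu [i0 [s0 [Iu0 [Su0 Hu]]]]] [Cv [i1 [s1 [Iv [Sv Hv]]]]] Iu Su.
  rewrite (is_inf_unique Iu0 Iu), (is_sup_unique Su0 Su) in Hu.
  destruct (Hu v i1 s1 Cv Iv Sv), (Hv u i s Cu Iu Su).
  replace i with i1 by lia. replace s with s1 by lia. auto.
Qed.

Lemma Csum_of_bounds a u w i s :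
  Csum G M D a u -> is_inf G M D u i -> is_sup G M D u s -> conjugate G a w ->
  pre (D ^^ i) w -> pre w (D ^^ s) -> Csum G M D a w.
Proof.
  intros Cu Iu Su Cw Hi Hs. pose proof (Delta_neq1_of_inf Iu) as HD.
  destruct (is_inf_exists HD Hi Hs) as [j Iw], (is_sup_exists HD Hi Hs) as [t Sw].
  destruct Cu as [_ [i0 [s0 [Iu0 [Su0 Hu]]]]].
  rewrite (is_inf_unique Iu0 Iu), (is_sup_unique Su0 Su) in Hu.
  destruct (Hu w j t Cw Iw Sw) as [Hji Hst].
  assert (j = i) by (apply Z.le_antisymm; [exact Hji | apply Iw, Hi]).
  assert (t = s) by (apply Z.le_antisymm; [apply Sw, Hs | exact Hst]).
  subst j t. split; [exact Cw|]. exists i, s. auto.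
Qed.

Lemma Csum_conj_gcd a u x y z : is_prefix_gcd z x y -> M x -> M y ->
  Csum G M D a u -> Csum G M D a (x^-1 * u * x) -> Csum G M D a (y^-1 * u * y) ->
  Csum G M D a (z^-1 * u * z).
Proof.
  intros Hz Mx My Cu Cx Cy. pose proof Cu as [Cau [i [s [Iu [Su _]]]]].
  destruct (Csum_inf_sup Cu Cx Iu Su) as [[Ix _] [Sx _]].
  destruct (Csum_inf_sup Cu Cy Iu Su) as [[Iy _] [Sy _]].
  apply (Csum_of_bounds Cu Iu Su); [apply conjugate_conj, Cau | |].
  - exact (inf_bound_conj_gcd Hz Mx My Ix Iy).
  - exact (sup_bound_conj_gcd Hz Mx My Sx Sy).
Qed.

Lemma Csum_conj_Delta a w : Csum G M D a w -> Csum G M D a (D^-1 * w * D).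
Proof.
  intro Cw. pose proof Cw as [Caw [i [s [Iw [Sw _]]]]].
  apply (Csum_of_bounds Cw Iw Sw); [apply conjugate_conj, Caw | |].
  - rewrite <- (gzpow_conj D i). apply prefix_conj_Delta, Iw.
  - rewrite <- (gzpow_conj D s). apply prefix_conj_Delta, Sw.
Qed.

Lemma nontrivial_simple_prefix l : Forall simple l -> gprod G l <> 1 ->
  exists s, simple s /\ s <> 1 /\ pre s (gprod G l).
Proof.
  induction 1 as [|c l Hc Hl IH]; intro Hne; [exfalso; apply Hne; reflexivity|].
  rewrite gprod_cons in *. destruct (classic (c = 1)) as [-> | Hc1].
  - rewrite gmul1l in *. destruct (IH Hne) as [s Hs]. exists s. exact Hs.
  - exists c. split; [exact Hc|]. split; [exact Hc1|].
    unfold prefix. rewrite mulKg. apply gprod_M.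
    eapply Forall_impl; [|exact Hl]. intros s [Ms _]. exact Ms.
Qed.

(* The gcd [x /\ Delta] keeps [u] in the summit class; a prefix-minimal
   candidate below it is a minimal simple element dividing [x]. *)
Lemma Ssum_prefix_exists a u x : M x -> x <> 1 ->
  Csum G M D a u -> Csum G M D a (x^-1 * u * x) ->
  exists t, Ssum G M D a u t /\ pre t x.
Proof.
  intros Mx Hx1 Cu Cx.
  destruct (M_prefix_gcds Mx M_Delta) as [z Hz]. pose proof Hz as [Mz [Zx [ZD Zmax]]].
  assert (Hz1 : z <> 1).
  { intro Ez. destruct (M_simple_factor Mx) as [l [Hl El]]. rewrite El in Hx1.
    destruct (nontrivial_simple_prefix Hl Hx1) as [s [[Ms Psd] [Hs1 Psx]]].
    rewrite <- El in Psx. apply Hs1, no_units; [exact Ms|].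
    pose proof (Zmax s Ms Psx Psd) as Psz. rewrite Ez in Psz.
    unfold prefix in Psz. rewrite gmul1r in Psz. exact Psz. }
  assert (Cand : Ssum_cand G M D a u z).
  { split; [split; assumption|]. split; [exact Hz1|].
    exact (Csum_conj_gcd Hz Mx M_Delta Cu Cx (Csum_conj_Delta Cu)). }
  destruct (exists_prefix_minimal _ Mz Cand) as [t [Ct [Ptz Hmin]]].
  exists t. split; [split; [exact Ct|]|exact (prefix_trans Ptz Zx)].
  intros t' Ct' Pt'. exact (Hmin t' (proj1 (proj1 Ct')) Ct' Pt').
Qed.

Lemma summit_chain_refl a u : Csum G M D a u -> summit_chain G M D a u u 1.
Proof.
  intro Cu. exists 1%nat, (fun _ => u), (fun _ => 1).
  split; [lia|]. split; [reflexivity|]. split; [reflexivity|].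
  split; [intros; exact Cu|]. split; [intros; lia|]. split; [reflexivity|].
  intros; lia.
Qed.

Lemma summit_chain_cons a u v s x : Csum G M D a u -> Ssum G M D a u s ->
  summit_chain G M D a (s^-1 * u * s) v x -> summit_chain G M D a u v (s * x).
Proof.
  intros Cu Ss [k [u_ [s_ [Hk [U1 [Uk [UC [SS [Ex ST]]]]]]]]].
  destruct k as [|k]; [lia|]. replace (S k - 1) with k in * by lia.
  exists (S (S k)), (fun i => match i with S (S j) => u_ (S j) | _ => u end),
                    (fun i => match i with S (S j) => s_ (S j) | _ => s end).
  split; [lia|]. split; [reflexivity|]. split; [exact Uk|]. split.
  { intros [|[|i]] Hi; [lia | exact Cu | apply UC; lia]. }
  split.
  { intros [|[|i]] Hi; [lia | exact (proj1 (proj1 Ss)) | apply SS; simpl in Hi; lia]. }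
  split.
  { rewrite Ex. change (S (S k) - 1) with (S k). cbn [seq map].
    rewrite gprod_cons, <- (seq_shift k 1), map_map. f_equal. f_equal.
    apply map_ext_in. intros [|j] Hj; [apply in_seq in Hj; lia | reflexivity]. }
  intros [|[|i]] Hi; [lia | split; [exact Ss | symmetry; exact U1] |].
  apply ST. simpl in Hi. lia.
Qed.

Lemma summit_chain_exists a x : M x -> forall u, Csum G M D a u ->
  Csum G M D a (x^-1 * u * x) -> summit_chain G M D a u (x^-1 * u * x) x.
Proof.
  induction x as [x IH] using (well_founded_ind proper_factor_wf).
  intros Mx u Cu Cx. destruct (classic (x = 1)) as [-> | Hx1].
  { replace (1^-1 * u * 1) with u by group. exact (summit_chain_refl Cu). }
  destruct (Ssum_prefix_exists Mx Hx1 Cu Cx) as [t [St Ptx]].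
  pose proof St as [[[Mt _] [Ht1 Ct]] _].
  assert (Hf : proper_factor (t^-1 * x) x).
  { split; [exact Ptx|]. exists t, 1.
    split; [exact Mt|]. split; [exact M_one|]. split; [group | left; exact Ht1]. }
  assert (Ct' : Csum G M D a ((t^-1 * x)^-1 * (t^-1 * u * t) * (t^-1 * x))).
  { replace (_ * _ * _) with (x^-1 * u * x) by group. exact Cx. }
  pose proof (summit_chain_cons Cu St (IH _ Hf Ptx _ Ct Ct')) as Hchain.
  rewrite mulKVg in Hchain.
  replace ((t^-1 * x)^-1 * (t^-1 * u * t) * (t^-1 * x)) with (x^-1 * u * x) in Hchain
    by group.
  exact Hchain.
Qed.

End Garside.

Theorem corollary3p3 (G : Group) (M : G -> Prop) (Delta : G)
  (HG : @is_garside G M Delta) (a u v x : G)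
  (Hu : @Csum G M Delta a u) (Hv : @Csum G M Delta a v)
  (Hx : M x) (Hxuv : gmul G (gmul G (ginv G x) u) x = v) :
  exists (k : nat) (u_ s_ : nat -> G),
    1 <= k /\ u_ 1 = u /\ u_ k = v /\
    (forall i, 1 <= i <= k -> @Csum G M Delta a (u_ i)) /\
    (forall i, 1 <= i <= k - 1 -> @simple G M Delta (s_ i)) /\
    x = gprod G (map s_ (seq 1 (k - 1))) /\
    (forall i, 1 <= i <= k - 1 ->
       @Ssum G M Delta a (u_ i) (s_ i) /\
       gmul G (gmul G (ginv G (s_ i)) (u_ i)) (s_ i) = u_ (i + 1)).
Proof.
  destruct HG as (M1 & Mmul & Hgen & Hatom & Hbnd & _ & Hgcd & _ & _ & MD & Hps & _ & Hsimp).
  subst v. exact (summit_chain_exists M1 Mmul Hatom Hbnd Hgen Hgcd MD Hps Hsimp x Hx Hu Hv).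
Qed.
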